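(* Let $\Lambda_{\mathbf q}$, the bar resolution $\mathbb B(\Lambda_{\mathbf q})$, the elements $f_\beta$ and the submodules $\mathbb P_m$ be as in the context. Then the bar differential maps $\mathbb P_m$ into $\mathbb P_{m-1}$ for every $m$, so $\mathbb P=(\mathbb P_m)_m$ is a subcomplex of $\mathbb B(\Lambda_{\mathbf q})$; moreover, for $|\beta|=m$, the bar differential sends $\tilde f_\beta$ to $$\sum_{j=1}^n\Big(\prod_{l<j}q_{l,j}^{\beta_l}\,x_j\tilde f_{\beta-[j]}+(-1)^m\prod_{l>j}q_{j,l}^{\beta_l}\,\tilde f_{\beta-[j]}x_j\Big).$$
   Context: $k$ is a field of characteristic $0$. Fix $n\ge1$ and $q_{i,j}\in k^*$ with $q_{j,i}=q_{i,j}^{-1}$, $q_{i,i}=-1$, and let $\Lambda_{\mathbf q}=k\langle x_1,\dots,x_n\mid x_ix_j=-q_{i,j}x_jx_i,\ x_i^2=0\rangle$. The bar resolution $\mathbb B(\Lambda_{\mathbf q})$ has $\mathbb B_m=\Lambda_{\mathbf q}^{\otimes(m+2)}$ (tensor over $k$) with differential $d(a_0\otimes\cdots\otimes a_{m+1})=\sum_{i=0}^m(-1)^ia_0\otimes\cdots\otimes a_ia_{i+1}\otimes\cdots\otimes a_{m+1}$. For $\beta\in\mathbb Z^n$ let $|\beta|=\sum\beta_i$ and $[l]$ the $l$-th unit vector. Define $f_\beta\in\Lambda_{\mathbf q}^{\otimes|\beta|}$ by: $f_{(0,\dots,0)}=1$, $f_{[l]}=x_l$, $f_\beta=0$ if some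 $\beta_l<0$, and for $\beta\in\mathbb N^n$, $f_\beta=\sum_{l=1}^n\prod_{k>l}q_{l,k}^{\beta_k}\,f_{\beta-[l]}\otimes x_l$. Put $\tilde f_\beta=1\otimes f_\beta\otimes 1\in\mathbb B_{|\beta|}$ and let $\mathbb P_m=\bigoplus_{\beta\in\mathbb N^n,|\beta|=m}\Lambda_{\mathbf q}\otimes f_\beta\otimes\Lambda_{\mathbf q}\subseteq\mathbb B_m$, the $\Lambda_{\mathbf q}^e$-submodule generated by the $\tilde f_\beta$ with $|\beta|=m$. *)

From HB Require Import structures.
From mathcomp Require Import all_boot all_order all_algebra.
Set Implicit Arguments. Unset Strict Implicit. Unset Printing Implicit Defensive.
Import GRing.Theory.
Local Open Scope ring_scope.

Section QExt.
Variables (k : fieldType) (n : nat) (q : 'I_n -> 'I_n -> k).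

(* Lambda_q as a k-vector space: basis x_S = x_{s1}...x_{sr} (s1<...<sr), S a subset of 'I_n.
   (generators are indexed 0..n-1 instead of 1..n) *)
Definition Lam := {ffun {set 'I_n} -> k^o}.
HB.instance Definition _ := GRing.Lmodule.copy Lam {ffun {set 'I_n} -> k^o}.
Definition lbasis (S : {set 'I_n}) : Lam := [ffun T => (T == S)%:R].
Definition lgen (i : 'I_n) : Lam := lbasis [set i].
Definition lone : Lam := lbasis set0.
(* x_S x_T = prod_{s in S, t in T, t < s} (-q_{s,t}) x_{S u T} if S,T disjoint, else 0
   (each inversion x_s x_t = -q_{s,t} x_t x_s; x_i^2 = 0). *)
Definition mono_coef (S T : {set 'I_n}) : k :=
  \prod_(s in S) \prod_(t in T | (t < s)%N) (- q s t).
Definition mono_mul (S T : {set 'I_n}) : Lam :=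
  if [disjoint S & T] then mono_coef S T *: lbasis (S :|: T) else 0.
Definition lmul (a b : Lam) : Lam :=
  \sum_(S : {set 'I_n}) \sum_(T : {set 'I_n}) (a S * b T) *: mono_mul S T.

(* Lambda_q^{(x) r} over k: basis indexed by words of r basis monomials. *)
Definition word r := {ffun 'I_r -> {set 'I_n}}.
Definition Tens r := {ffun word r -> k^o}.
HB.instance Definition _ r := GRing.Lmodule.copy (Tens r) {ffun word r -> k^o}.
Definition pure r (s : seq Lam) : Tens r :=
  [ffun w : word r => \prod_(i < r) (nth 0 s i) (w i)].
Definition wseq r (w : word r) : seq Lam := [seq lbasis (w i) | i <- enum 'I_r].
Definition merge (i : nat) (s : seq Lam) : seq Lam :=
  take i s ++ lmul (nth 0 s i) (nth 0 s i.+1) :: drop i.+2 s.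

(* bar differential B_m = Tens m.+2 -> B_{m-1} = Tens m.+1 (take r = m.+1),
   d(a_0 (x) ... (x) a_{m+1}) = sum_{i=0}^m (-1)^i a_0 (x) ... (x) a_i a_{i+1} (x) ... *)
Definition bar_d r (t : Tens r.+1) : Tens r :=
  \sum_(w : word r.+1) t w *: \sum_(i < r) (-1) ^+ i *: pure r (merge i (wseq w)).

Definition lact r (a : Lam) (t : Tens r) : Tens r :=
  \sum_(w : word r) t w *:
    pure r (match wseq w with x :: s => lmul a x :: s | [::] => [::] end).
Definition ract r (a : Lam) (t : Tens r) : Tens r :=
  \sum_(w : word r) t w *:
    pure r (match wseq w with
            | x :: s => rcons (belast x s) (lmul (last x s) a)
            | [::] => [::] end).

Definition tensR m (t : Tens m) (a : Lam) : Tens m.+1 :=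
  \sum_(w : word m) t w *: pure m.+1 (rcons (wseq w) a).
Definition tilde m (t : Tens m) : Tens m.+2 :=
  \sum_(w : word m) t w *: pure m.+2 (lone :: rcons (wseq w) lone).

Definition mvec := {ffun 'I_n -> nat}.
Definition bsum (b : mvec) : nat := (\sum_(i < n) b i)%N.
(* beta - [l] (only used when beta_l > 0) *)
Definition bsub (b : mvec) (l : 'I_n) : mvec :=
  [ffun i => if i == l then (b i).-1 else b i].

(* fT m b = f_b when |b| = m, and 0 otherwise *)
Fixpoint fT (m : nat) (b : mvec) {struct m} : Tens m :=
  match m return Tens m with
  | 0 => if bsum b == 0%N then pure 0 [::] else 0
  | m'.+1 => \sum_(l < n)
      (if (0 < b l)%N then
         (\prod_(j < n | (l < j)%N) q l j ^+ b j) *: tensR (fT m' (bsub b l)) (lgen l)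
       else 0)
  end.

Definition ftilde m (b : mvec) : Tens m.+2 := tilde (fT m b).

(* P_m: the Lambda^e-submodule of B_m generated by the ftilde_b with |b| = m,
   i.e. all finite sums of a * ftilde_b * c *)
Definition inP m (t : Tens m.+2) : Prop :=
  exists s : seq (Lam * mvec * Lam),
    all (fun x => bsum x.1.2 == m) s /\
    t = \sum_(x <- s) lact x.1.1 (ract x.2 (ftilde m x.1.2)).

End QExt.

From Pilot Require Import Defs.
From HB Require Import structures.
From mathcomp Require Import all_boot all_order all_algebra zify ring.
Set Implicit Arguments. Unset Strict Implicit. Unset Printing Implicit Defensive.
Import GRing.Theory.
Local Open Scope ring_scope.

(* Every operation on tensors is the k-linear extension of its values on the
   basis of pure tensors x_S1 (x) ... (x) x_Sr of monomials, so identities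
   between operations only need to be checked on such tensors, where they come
   down to the associativity of the monomial product.
   For |b| = m, writing 1 (x) f_b (x) 1 as 1 (x) (f_b (x) 1) gives
     d(1 (x) f_b (x) 1) = f_b (x) 1 - 1 (x) d'(f_b) (x) 1 + (-1)^m 1 (x) f_b,
   where d' merges adjacent factors of f_b.  Now d'(f_b) = 0 by induction on m:
   by the defining recursion and the induction hypothesis, d'(f_b) is, up to
   sign, sum_l c_l f_(b-[l]).x_l (x_l multiplying the last factor), and
   expanding f_(b-[l]) once more turns this into a sum over pairs (l, l') that
   is skew-symmetric, because x_l' x_l = - q_{l',l} x_l x_l' and
   q_{l,l'} q_{l',l} = 1, and vanishes on the diagonal, because x_l^2 = 0.
   Finally f_b also satisfies the mirrored recursion
   f_b = sum_j (prod_{l<j} q_{l,j}^b_l) x_j (x) f_(b-[j]), which expands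
   f_b (x) 1, while the defining recursion expands 1 (x) f_b.  Since d is a map
   of bimodules, the resulting formula shows that d maps P_m into P_(m-1). *)

Lemma sum_skew0 (V : zmodType) m (G : 'I_m -> 'I_m -> V) :
  (forall i j, G j i = - G i j) -> (forall i, G i i = 0) -> \sum_i \sum_j G i j = 0.
Proof.
move=> skewG diagG.
have splitG i : \sum_j G i j =
    \sum_(j : 'I_m | (j < i)%N) G i j + \sum_(j : 'I_m | (i < j)%N) G i j.
  rewrite [LHS](bigD1 i) //= diagG add0r [LHS](bigID (fun j : 'I_m => (j < i)%N)) /=.
  by congr (_ + _); apply: eq_bigl => j; rewrite -(inj_eq val_inj) /=; case: ltngtP.
rewrite (eq_bigr _ (fun i _ => splitG i)) big_split /=.
rewrite [X in _ + X](exchange_big_dep xpredT) //=; apply/eqP; rewrite addr_eq0 -sumrN.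
apply/eqP/eq_bigr => i _; rewrite -sumrN.
by apply: eq_bigr => j _; rewrite skewG.
Qed.

Lemma disjoint_setUl (T : finType) (A B C : {set T}) :
  [disjoint A :|: B & C] = [disjoint A & C] && [disjoint B & C].
Proof. by rewrite !disjoints_subset subUset. Qed.

Lemma disjoint_setUr (T : finType) (A B C : {set T}) :
  [disjoint A & B :|: C] = [disjoint A & B] && [disjoint A & C].
Proof. by rewrite disjoint_sym disjoint_setUl !(disjoint_sym A). Qed.

Section QuantumExterior.
Variables (k : fieldType) (n : nat).
Local Notation lam := (Lam k n).
Local Notation tens r := (Tens k n r).
Local Notation mono := (@lbasis k n).

Definition lext r r' (F : word n r -> tens r') (t : tens r) : tens r' :=
  \sum_(w : word n r) t w *: F w.

Definition lext_map r r' (L : tens r -> tens r') :=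
  forall t, L t = lext (fun w => L (pure r (wseq k w))) t.

Definition mono_tensor r (ss : seq {set 'I_n}) : tens r := pure r (map mono ss).
Definition word_sets r (w : word n r) : seq {set 'I_n} := [seq w i | i <- enum 'I_r].
Definition word_of_sets r (ss : seq {set 'I_n}) : word n r :=
  [ffun i : 'I_r => nth set0 ss i].

Lemma wseq_word_sets r (w : word n r) : wseq k w = map mono (word_sets w).
Proof. by rewrite /wseq /word_sets map_comp. Qed.

Lemma size_word_sets r (w : word n r) : size (word_sets w) = r.
Proof. by rewrite /word_sets size_map size_enum_ord. Qed.

Lemma word_of_setsK r ss : size ss = r -> word_sets (word_of_sets r ss) = ss.
Proof.
move=> hs; rewrite /word_sets.
have -> : [seq word_of_sets r ss i | i <- enum 'I_r] =
          map (nth set0 ss) (map val (enum 'I_r)).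
  by rewrite -map_comp; apply: eq_map => i; rewrite /= ffunE.
by rewrite val_enum_ord map_nth_iota0 ?hs // -hs take_size.
Qed.

Lemma mono_tensor_word_sets r (w : word n r) :
  mono_tensor r (word_sets w) = pure r (wseq k w).
Proof. by rewrite /mono_tensor wseq_word_sets. Qed.

Lemma pureE r (s : seq lam) (w : word n r) :
  pure r s w = \prod_(i < r) (nth 0 s i) (w i).
Proof. by rewrite ffunE. Qed.

Lemma lbasisE (S T : {set 'I_n}) : mono S T = (T == S)%:R.
Proof. by rewrite ffunE. Qed.

Lemma nth_wseq r (w : word n r) (i : 'I_r) : nth 0 (wseq k w) i = mono (w i).
Proof. by rewrite /wseq (nth_map i) ?size_enum_ord // nth_ord_enum. Qed.

Lemma pure_wseqE r (w w' : word n r) : pure r (wseq k w') w = (w == w')%:R.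
Proof.
rewrite pureE; under eq_bigr => i _ do rewrite nth_wseq lbasisE.
case: (eqVneq w w') => [->|ne]; first by rewrite big1 // => i _; rewrite eqxx.
have [i hi] : exists i, w i != w' i.
  apply/existsP; apply: contraR ne => /existsPn h; apply/eqP/ffunP => i.
  by apply/eqP; move: (h i); rewrite negbK.
by rewrite (bigD1 i) //= (negbTE hi) mul0r.
Qed.

Lemma tens_expand r (t : tens r) : t = lext (fun w => pure r (wseq k w)) t.
Proof.
apply/ffunP => w0; rewrite sum_ffunE (bigD1 w0) //= big1 ?addr0.
  by rewrite ffunE pure_wseqE eqxx; exact: (esym (mulr1 _)).
by move=> w hw; rewrite ffunE pure_wseqE eq_sym (negbTE hw); exact: (mulr0 _).
Qed.

Lemma lext_wseq r r' (F : word n r -> tens r') w : lext F (pure r (wseq k w)) = F w.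
Proof.
rewrite /lext (bigD1 w) //= big1 ?addr0; first by rewrite pure_wseqE eqxx scale1r.
by move=> w' hw; rewrite pure_wseqE (negbTE hw) scale0r.
Qed.

Lemma lext_mono_tensor r r' (F : word n r -> tens r') ss :
  size ss = r -> lext F (mono_tensor r ss) = F (word_of_sets r ss).
Proof.
by move=> hs; rewrite -(word_of_setsK hs) mono_tensor_word_sets lext_wseq word_of_setsK.
Qed.

Section Lext.
Variables (r r' : nat) (F : word n r -> tens r').

Lemma lextD t u : lext F (t + u) = lext F t + lext F u.
Proof. by rewrite /lext -big_split; apply: eq_bigr => w _; rewrite ffunE scalerDl. Qed.

Lemma lextZ c t : lext F (c *: t) = c *: lext F t.
Proof. by rewrite /lext scaler_sumr; apply: eq_bigr => w _; rewrite ffunE scalerA. Qed.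

Lemma lext0 : lext F 0 = 0.
Proof. by rewrite /lext big1 // => w _; rewrite ffunE scale0r. Qed.

Lemma lext_sum I (s : seq I) (P : pred I) G :
  lext F (\sum_(i <- s | P i) G i) = \sum_(i <- s | P i) lext F (G i).
Proof. exact: (big_morph _ lextD lext0). Qed.

Lemma eq_lext G t : (forall w, F w = G w) -> lext F t = lext G t.
Proof. by move=> eqFG; apply: eq_bigr => w _; rewrite eqFG. Qed.

Lemma lext_mapP : lext_map (lext F).
Proof. by move=> t; apply: eq_lext => w; rewrite lext_wseq. Qed.

End Lext.

Lemma lext_comp r r' r'' (F : word n r' -> tens r'') (G : word n r -> tens r') t :
  lext F (lext G t) = lext (fun w => lext F (G w)) t.
Proof. by rewrite [lext G t]/lext lext_sum; apply: eq_bigr => w _; rewrite lextZ. Qed.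

Section LextMap.
Variables (r r' : nat) (L : tens r -> tens r').
Hypothesis linL : lext_map L.

Lemma lext_mapD t u : L (t + u) = L t + L u.
Proof. by rewrite !(linL (_ + _)) lextD -!linL. Qed.

Lemma lext_mapZ c t : L (c *: t) = c *: L t.
Proof. by rewrite linL lextZ -linL. Qed.

Lemma lext_map0 : L 0 = 0.
Proof. by rewrite linL lext0. Qed.

Lemma lext_map_sum I (s : seq I) (P : pred I) G :
  L (\sum_(i <- s | P i) G i) = \sum_(i <- s | P i) L (G i).
Proof. exact: (big_morph _ lext_mapD lext_map0). Qed.

Lemma lext_map_scale c : lext_map (fun t => c *: L t).
Proof.
move=> t; rewrite linL /lext scaler_sumr; apply: eq_bigr => w _.
by rewrite !scalerA mulrC.
Qed.

Lemma lext_map_opp : lext_map (fun t => - L t).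
Proof.
move=> t; rewrite -scaleN1r (lext_map_scale (-1)).
by apply: eq_lext => w; rewrite scaleN1r.
Qed.

End LextMap.

Lemma lext_map_id {r} : lext_map (fun t : tens r => t).
Proof. exact: tens_expand. Qed.

Lemma lext_map_comp r r' r'' (L1 : tens r' -> tens r'') (L2 : tens r -> tens r') :
  lext_map L1 -> lext_map L2 -> lext_map (fun t => L1 (L2 t)).
Proof.
move=> lin1 lin2 t; rewrite lin2 lin1 lext_comp; apply: eq_lext => w.
exact: (esym (lin1 _)).
Qed.

Lemma lext_map_add r r' (L1 L2 : tens r -> tens r') :
  lext_map L1 -> lext_map L2 -> lext_map (fun t => L1 t + L2 t).
Proof.
move=> lin1 lin2 t; rewrite lin1 lin2 /lext -big_split.
by apply: eq_bigr => w _; rewrite scalerDr.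
Qed.

Lemma lext_map_eq r r' (L1 L2 : tens r -> tens r') :
  lext_map L1 -> lext_map L2 ->
  (forall ss, size ss = r -> L1 (mono_tensor r ss) = L2 (mono_tensor r ss)) ->
  forall t, L1 t = L2 t.
Proof.
move=> lin1 lin2 eq12 t; rewrite lin1 lin2; apply: eq_lext => w.
by rewrite -!mono_tensor_word_sets eq12 // size_word_sets.
Qed.

Lemma nth_cat_cons_neq (s1 s2 : seq lam) y y' j : j != size s1 ->
  nth 0 (s1 ++ y :: s2) j = nth 0 (s1 ++ y' :: s2) j.
Proof.
move=> hj; rewrite !nth_cat; case: ltnP => // h.
case e: (j - size s1)%N => [|j'] //.
by move: hj; rewrite eqn_leq h andbT -subn_eq0 e.
Qed.

Section PureSlot.
Variables (r : nat) (s1 s2 : seq lam).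
Hypothesis s1_lt : (size s1 < r)%N.

Lemma pure_slot y (w : word n r) :
  pure r (s1 ++ y :: s2) w = y (w (Ordinal s1_lt)) *
    \prod_(j < r | j != Ordinal s1_lt) nth 0 (s1 ++ 0 :: s2) j (w j).
Proof.
rewrite pureE (bigD1 (Ordinal s1_lt)) //= nth_cat ltnn subnn /=; congr (_ * _).
by apply: eq_bigr => j hj; rewrite (@nth_cat_cons_neq _ _ y 0).
Qed.

Lemma pure_catZ c x : pure r (s1 ++ (c *: x) :: s2) = c *: pure r (s1 ++ x :: s2).
Proof.
by apply/ffunP => w; rewrite [RHS]ffunE !pure_slot ffunE -scalerAl.
Qed.

Lemma pure_catD x y :
  pure r (s1 ++ (x + y) :: s2) = pure r (s1 ++ x :: s2) + pure r (s1 ++ y :: s2).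
Proof.
apply/ffunP => w; rewrite [RHS]ffunE !pure_slot ffunE.
exact: (mulrDl _ _ _).
Qed.

Lemma pure_cat0 : pure r (s1 ++ 0 :: s2) = 0.
Proof. by rewrite -(scale0r (0 : lam)) pure_catZ scale0r. Qed.

Lemma pure_cat_sum I (s : seq I) (P : pred I) F :
  pure r (s1 ++ (\sum_(i <- s | P i) F i) :: s2) =
  \sum_(i <- s | P i) pure r (s1 ++ F i :: s2).
Proof.
exact: (big_morph (fun x => pure r (s1 ++ x :: s2)) pure_catD pure_cat0).
Qed.

End PureSlot.

Definition merge_sets i (ss : seq {set 'I_n}) :=
  take i ss ++ (nth set0 ss i :|: nth set0 ss i.+1) :: drop i.+2 ss.

Definition tensL m (a : lam) (t : tens m) : tens m.+1 :=
  lext (fun w => pure m.+1 (a :: wseq k w)) t.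

Lemma lext_map_tensR r a : lext_map (fun t : tens r => tensR t a).
Proof. exact: lext_mapP. Qed.

Lemma lext_map_tilde {r} : lext_map (@tilde k n r).
Proof. exact: lext_mapP. Qed.

Lemma lext_map_tensL r a : lext_map (@tensL r a).
Proof. exact: lext_mapP. Qed.

Lemma tensR_mono m ss S :
  size ss = m -> tensR (mono_tensor m ss) (mono S) = mono_tensor m.+1 (rcons ss S).
Proof.
move=> h; rewrite /tensR -/(lext _ _) lext_mono_tensor // wseq_word_sets word_of_setsK //.
by rewrite /mono_tensor map_rcons.
Qed.

Lemma tensL_mono m ss S :
  size ss = m -> tensL (mono S) (mono_tensor m ss) = mono_tensor m.+1 (S :: ss).
Proof. by move=> h; rewrite /tensL lext_mono_tensor // wseq_word_sets word_of_setsK. Qed.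

Lemma tilde_mono m ss :
  size ss = m -> tilde (mono_tensor m ss) = mono_tensor m.+2 (set0 :: rcons ss set0).
Proof.
move=> h; rewrite /tilde -/(lext _ _) lext_mono_tensor // wseq_word_sets word_of_setsK //.
by rewrite /mono_tensor /= map_rcons.
Qed.

Lemma tilde_tensL m (t : tens m) : tilde t = tensL (mono set0) (tensR t (mono set0)).
Proof.
apply: (lext_map_eq lext_map_tilde (lext_map_comp (lext_map_tensL _) (lext_map_tensR _))).
by move=> ss h; rewrite tilde_mono // tensR_mono // tensL_mono // size_rcons h.
Qed.

Lemma tensR_tensL r S T (t : tens r) :
  tensR (tensL (mono S) t) (mono T) = tensL (mono S) (tensR t (mono T)).
Proof.
apply: (lext_map_eq (lext_map_comp (lext_map_tensR _) (lext_map_tensL _))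
  (lext_map_comp (lext_map_tensL _) (lext_map_tensR _))) => ss h.
by rewrite tensL_mono // tensR_mono /= ?h // tensR_mono // tensL_mono // size_rcons h.
Qed.

Lemma size_merge_sets i ss r :
  (i < r)%N -> size ss = r.+1 -> size (merge_sets i ss) = r.
Proof. by move=> hi hs; rewrite /merge_sets size_cat /= size_takel ?size_drop ?hs; lia. Qed.

Lemma merge_sets_cons i X ss : merge_sets i.+1 (X :: ss) = X :: merge_sets i ss.
Proof. by []. Qed.

Lemma merge_sets0 X Y ss : merge_sets 0 (X :: Y :: ss) = (X :|: Y) :: ss.
Proof. by rewrite /merge_sets /= drop0. Qed.

Lemma merge_sets_rcons i ss S : (i.+1 < size ss)%N ->
  merge_sets i (rcons ss S) = rcons (merge_sets i ss) S.
Proof.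
move=> h; rewrite /merge_sets !nth_rcons.
have h1 : (i < size ss)%N by lia.
rewrite h1 h -cats1 takel_cat; last lia.
by rewrite cats1 drop_rcons // rcons_cat.
Qed.

Lemma merge_sets_rcons_last i ss S : size ss = i.+1 ->
  merge_sets i (rcons ss S) = rcons (take i ss) (nth set0 ss i :|: S).
Proof.
move=> h; rewrite /merge_sets !nth_rcons h ltnSn ltnn eqxx -!cats1 takel_cat; last lia.
by rewrite drop_oversize // size_cat h /=; lia.
Qed.

Lemma rcons_take_nth (ss : seq {set 'I_n}) r :
  size ss = r.+1 -> ss = rcons (take r ss) (nth set0 ss r).
Proof. by move=> h; rewrite -take_nth ?h // -h take_size. Qed.

Lemma bsubE (b : mvec n) l j : bsub b l j = if j == l then (b j).-1 else b j.
Proof. by rewrite ffunE. Qed.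

Lemma bsubC (b : mvec n) l j : bsub (bsub b l) j = bsub (bsub b j) l.
Proof.
apply/ffunP => i; rewrite !bsubE.
by case: (eqVneq i j) => hij; case: (eqVneq i l) => hil; rewrite ?hij ?hil ?eqxx.
Qed.

Lemma bsub_gt0 (b : mvec n) l j : (0 < bsub b l j)%N -> (0 < b j)%N.
Proof. by rewrite bsubE; case: eqP => // _; case: (b j). Qed.

Lemma bsub_gt0C (b : mvec n) l j :
  (0 < b l)%N && (0 < bsub b l j)%N = (0 < b j)%N && (0 < bsub b j l)%N.
Proof. by rewrite !bsubE; case: (eqVneq j l) => [->|_] //; rewrite andbC. Qed.

Lemma bsum_eq0 (b : mvec n) j : bsum b = 0%N -> b j = 0%N.
Proof. by move/eqP; rewrite /bsum (bigD1 j) //= addn_eq0 => /andP[/eqP ->]. Qed.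

Lemma bsum_bsub (b : mvec n) j : (0 < b j)%N -> bsum (bsub b j) = (bsum b).-1.
Proof.
move=> hj; rewrite /bsum (bigD1 j) //= [in RHS](bigD1 j) //= bsubE eqxx.
have -> : (\sum_(i < n | i != j) bsub b j i = \sum_(i < n | i != j) b i)%N.
  by apply: eq_bigr => i hi; rewrite bsubE (negbTE hi).
by rewrite -subn1 addnBAC // subn1.
Qed.

Lemma prod_exp_bsub (P : pred 'I_n) (f : 'I_n -> k) (b : mvec n) l : (0 < b l)%N ->
  \prod_(j < n | P j) f j ^+ b j =
  (\prod_(j < n | P j) f j ^+ bsub b l j) * (if P l then f l else 1).
Proof.
move=> hb; case: ifP => Pl; last first.
  rewrite mulr1; apply: eq_bigr => j Pj; rewrite bsubE.
  by case: eqP => // hj; move: Pj; rewrite hj Pl.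
rewrite (bigD1 l) //= [in RHS](bigD1 l) //= bsubE eqxx.
have -> : \prod_(i < n | P i && (i != l)) f i ^+ bsub b l i =
          \prod_(i < n | P i && (i != l)) f i ^+ b i.
  by apply: eq_bigr => i /andP[_ hi]; rewrite bsubE (negbTE hi).
by rewrite mulrAC -exprSr prednK.
Qed.

Section BarDifferential.
Variable q : 'I_n -> 'I_n -> k.

Definition mcoef (S T : {set 'I_n}) : k :=
  if [disjoint S & T] then mono_coef q S T else 0.

Lemma mono_mulE S T : mono_mul q S T = mcoef S T *: mono (S :|: T).
Proof. by rewrite /mono_mul /mcoef; case: ifP; rewrite ?scale0r. Qed.

Lemma lmul_mono S T : lmul q (mono S) (mono T) = mcoef S T *: mono (S :|: T).
Proof.
rewrite /lmul (bigD1 S) //= [X in _ + X]big1 ?addr0; last first.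
  by move=> S' hS'; rewrite big1 // => T' _; rewrite !lbasisE (negbTE hS') mul0r scale0r.
rewrite (bigD1 T) //= [X in _ + X]big1 ?addr0; last first.
  by move=> T' hT'; rewrite !lbasisE (negbTE hT') mulr0 scale0r.
by rewrite !lbasisE !eqxx mul1r scale1r mono_mulE.
Qed.

Lemma lext_map_bar_d {r} : lext_map (@bar_d k n q r).
Proof. exact: lext_mapP. Qed.

Lemma lext_map_lact r a : lext_map (@lact k n q r a).
Proof. exact: lext_mapP. Qed.

Lemma lext_map_ract r a : lext_map (@ract k n q r a).
Proof. exact: lext_mapP. Qed.

Lemma lact_mono r ss S T : size ss = r ->
  lact q (mono S) (mono_tensor r.+1 (T :: ss)) = mcoef S T *: mono_tensor r.+1 ((S :|: T) :: ss).
Proof.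
move=> h; rewrite /lact -/(lext _ _) lext_mono_tensor /= ?h //.
by rewrite wseq_word_sets word_of_setsK /= ?h // lmul_mono (pure_catZ (s1 := [::])).
Qed.

Lemma update_last_rcons (f : lam -> lam) (l : seq lam) y :
  match rcons l y with x :: s => rcons (belast x s) (f (last x s)) | [::] => [::] end
  = rcons l (f y).
Proof. by case: l => //= x l; rewrite belast_rcons last_rcons. Qed.

Lemma ract_mono r ss S T : size ss = r ->
  ract q (mono S) (mono_tensor r.+1 (rcons ss T)) =
  mcoef T S *: mono_tensor r.+1 (rcons ss (T :|: S)).
Proof.
move=> h; rewrite /ract -/(lext _ _) lext_mono_tensor ?size_rcons ?h //.
rewrite wseq_word_sets word_of_setsK ?size_rcons ?h // map_rcons.
rewrite (update_last_rcons (fun x => lmul q x (mono S))) lmul_mono -cats1.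
by rewrite pure_catZ ?size_map ?h // /mono_tensor map_rcons cats1.
Qed.

Lemma bar_d_mono r ss : size ss = r.+1 ->
  bar_d q (mono_tensor r.+1 ss) =
  \sum_(i < r) ((-1) ^+ i * mcoef (nth set0 ss i) (nth set0 ss i.+1))
     *: mono_tensor r (merge_sets i ss).
Proof.
move=> h; rewrite /bar_d -/(lext _ _) lext_mono_tensor // wseq_word_sets word_of_setsK //.
apply: eq_bigr => i _; have hi := ltn_ord i.
rewrite /Defs.merge !(nth_map set0) ?h; try lia.
rewrite lmul_mono pure_catZ ?size_takel ?size_map ?h; try lia.
by rewrite scalerA /mono_tensor /merge_sets map_cat /= map_take map_drop.
Qed.

Lemma mono_coefUl (S T U : {set 'I_n}) : [disjoint S & T] ->
  mono_coef q (S :|: T) U = mono_coef q S U * mono_coef q T U.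
Proof.
by move=> dST; rewrite /mono_coef (eq_bigl [predU S & T]) ?bigU // => i; rewrite !inE.
Qed.

Lemma mono_coefUr (S T U : {set 'I_n}) : [disjoint T & U] ->
  mono_coef q S (T :|: U) = mono_coef q S T * mono_coef q S U.
Proof.
move=> dTU; rewrite /mono_coef -big_split; apply: eq_bigr => s _ /=.
by rewrite !big_mkcondr /= (eq_bigl [predU T & U]) ?bigU // => i; rewrite !inE.
Qed.

Lemma mcoef0l (T : {set 'I_n}) : mcoef set0 T = 1.
Proof. by rewrite /mcoef disjoints_subset sub0set /mono_coef big_set0. Qed.

Lemma mcoef0r (S : {set 'I_n}) : mcoef S set0 = 1.
Proof.
rewrite /mcoef disjoint_sym disjoints_subset sub0set /mono_coef.
by rewrite big1 // => s _; rewrite big_pred0 // => t; rewrite inE.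
Qed.

(* Associativity of the monomial product. *)
Lemma mcoef_cocycle (S T U : {set 'I_n}) :
  mcoef T U * mcoef S (T :|: U) = mcoef S T * mcoef (S :|: T) U.
Proof.
rewrite /mcoef disjoint_setUl disjoint_setUr.
case: (boolP [disjoint S & T]) => dST; case: (boolP [disjoint S & U]) => dSU;
  case: (boolP [disjoint T & U]) => dTU; rewrite /= ?mulr0 ?mul0r //.
by rewrite mono_coefUl // mono_coefUr //; ring.
Qed.

Lemma mcoef1 (a c : 'I_n) :
  mcoef [set a] [set c] = if a == c then 0 else if (c < a)%N then - q a c else 1.
Proof.
rewrite /mcoef disjoints1 in_set1 /mono_coef big_set1.
by case: eqP => //= _; rewrite big_mkcondr big_set1.
Qed.

Lemma lact1 r (t : tens r.+1) : lact q (mono set0) t = t.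
Proof.
apply: (lext_map_eq (lext_map_lact _) lext_map_id) => -[|T ss] //= [h].
by rewrite lact_mono // mcoef0l set0U scale1r.
Qed.

Lemma ract1 r (t : tens r.+1) : ract q (mono set0) t = t.
Proof.
apply: (lext_map_eq (lext_map_ract _) lext_map_id) => ss.
case/lastP: ss => [|ss T] //; rewrite size_rcons => -[h].
by rewrite ract_mono // mcoef0r setU0 scale1r.
Qed.

Lemma bar_d_tensL r U (t : tens r.+1) :
  bar_d q (tensL (mono U) t) = lact q (mono U) t - tensL (mono U) (bar_d q t).
Proof.
apply: (lext_map_eq (lext_map_comp lext_map_bar_d (lext_map_tensL _))
   (lext_map_add (lext_map_lact _)
      (lext_map_opp (lext_map_comp (lext_map_tensL _) lext_map_bar_d)))).
move=> -[|T ss] //= [h].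
rewrite tensL_mono /= ?h // (bar_d_mono (ss := U :: T :: ss)) /= ?h // big_ord_recl /=.
rewrite expr0 mul1r lact_mono // bar_d_mono /= ?h // (lext_map_sum (lext_map_tensL _)) -sumrN.
congr (_ + _); [by rewrite merge_sets0 | apply: eq_bigr => i _].
rewrite /bump add1n !add0n (lext_mapZ (lext_map_tensL _)) tensL_mono; last first.
  by apply: size_merge_sets; rewrite /= ?h.
by rewrite exprS mulN1r mulNr scaleNr.
Qed.

Lemma bar_d_tensR r S (t : tens r.+1) :
  bar_d q (tensR t (mono S)) = tensR (bar_d q t) (mono S) + (-1) ^+ r *: ract q (mono S) t.
Proof.
apply: (lext_map_eq (lext_map_comp lext_map_bar_d (lext_map_tensR _))
   (lext_map_add (lext_map_comp (lext_map_tensR _) lext_map_bar_d)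
      (lext_map_scale (lext_map_ract _) _))) => ss h.
rewrite tensR_mono // bar_d_mono ?size_rcons ?h // big_ord_recr /=.
rewrite bar_d_mono // (lext_map_sum (lext_map_tensR _)); congr (_ + _).
  apply: eq_bigr => i _; have hi := ltn_ord i.
  rewrite (lext_mapZ (lext_map_tensR _)) tensR_mono; last exact: size_merge_sets.
  rewrite !nth_rcons h; have -> : (i < r.+1)%N by lia.
  have -> : (i.+1 < r.+1)%N by lia.
  by rewrite merge_sets_rcons // h.
rewrite [in mono_tensor r.+1 ss](rcons_take_nth h) ract_mono ?size_takel ?h // scalerA.
by rewrite merge_sets_rcons_last // !nth_rcons h ltnSn ltnn eqxx mulrC.
Qed.

Lemma bar_d_lact_mono r S (t : tens r.+2) :
  bar_d q (lact q (mono S) t) = lact q (mono S) (bar_d q t).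
Proof.
apply: (lext_map_eq (lext_map_comp lext_map_bar_d (lext_map_lact _))
  (lext_map_comp (lext_map_lact _) lext_map_bar_d)) => -[|T [|V ss]] //= [h].
rewrite lact_mono /= ?h // (lext_mapZ lext_map_bar_d) bar_d_mono /= ?h // big_ord_recl.
rewrite bar_d_mono /= ?h // (lext_map_sum (lext_map_lact _)) big_ord_recl /=.
rewrite !merge_sets0 (lext_mapZ (lext_map_lact _)) !lact_mono // scalerDr !scalerA.
congr (_ + _); first by rewrite !expr0 !mul1r setUA mcoef_cocycle.
rewrite scaler_sumr; apply: eq_bigr => i _.
rewrite /bump add1n !add0n !merge_sets_cons (lext_mapZ (lext_map_lact _)) lact_mono; last first.
  by apply: size_merge_sets => //=; rewrite h.
by rewrite !scalerA mulrC.
Qed.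

Lemma bar_d_ract_mono r S (t : tens r.+2) :
  bar_d q (ract q (mono S) t) = ract q (mono S) (bar_d q t).
Proof.
apply: (lext_map_eq (lext_map_comp lext_map_bar_d (lext_map_ract _))
  (lext_map_comp (lext_map_ract _) lext_map_bar_d)) => ss.
case/lastP: ss => [|ss V] //; rewrite size_rcons => -[h].
rewrite ract_mono // (lext_mapZ lext_map_bar_d) bar_d_mono ?size_rcons ?h // big_ord_recr /=.
rewrite bar_d_mono ?size_rcons ?h // (lext_map_sum (lext_map_ract _)) big_ord_recr /= scalerDr.
congr (_ + _).
  rewrite scaler_sumr; apply: eq_bigr => i _; have hi := ltn_ord i.
  rewrite !nth_rcons h; have -> : (i < r.+1)%N by lia.
  have -> : (i.+1 < r.+1)%N by lia.
  rewrite !merge_sets_rcons ?h // (lext_mapZ (lext_map_ract _)) ract_mono; last first.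
    exact: size_merge_sets.
  by rewrite !scalerA mulrC.
rewrite !merge_sets_rcons_last // !nth_rcons h ltnSn ltnn eqxx.
rewrite (lext_mapZ (lext_map_ract _)) ract_mono ?size_takel ?h // !scalerA -setUA.
by rewrite mulrCA mcoef_cocycle mulrA.
Qed.

Lemma ract_lact_mono r S T (t : tens r.+2) :
  ract q (mono S) (lact q (mono T) t) = lact q (mono T) (ract q (mono S) t).
Proof.
apply: (lext_map_eq (lext_map_comp (lext_map_ract _) (lext_map_lact _))
  (lext_map_comp (lext_map_lact _) (lext_map_ract _))) => -[|U ss] //.
case/lastP: ss => [|mid V] //=; rewrite size_rcons => -[h].
rewrite lact_mono ?size_rcons ?h // (lext_mapZ (lext_map_ract _)) -rcons_cons.
rewrite ract_mono /= ?h // -[U :: rcons mid V]rcons_cons ract_mono /= ?h //.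
by rewrite (lext_mapZ (lext_map_lact _)) lact_mono ?size_rcons ?h // !scalerA mulrC.
Qed.

Lemma lact_lact_mono r S T (t : tens r.+1) :
  lact q (mono S) (lact q (mono T) t) = mcoef S T *: lact q (mono (S :|: T)) t.
Proof.
apply: (lext_map_eq (lext_map_comp (lext_map_lact _) (lext_map_lact _))
  (lext_map_scale (lext_map_lact _) _)) => -[|U ss] //= [h].
rewrite !lact_mono // (lext_mapZ (lext_map_lact _)) lact_mono //.
by rewrite !scalerA mcoef_cocycle setUA.
Qed.

Lemma ract_ract_mono r S T (t : tens r.+1) :
  ract q (mono S) (ract q (mono T) t) = mcoef T S *: ract q (mono (T :|: S)) t.
Proof.
apply: (lext_map_eq (lext_map_comp (lext_map_ract _) (lext_map_ract _))
  (lext_map_scale (lext_map_ract _) _)) => ss.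
case/lastP: ss => [|ss U] //; rewrite size_rcons => -[h].
rewrite !ract_mono // (lext_mapZ (lext_map_ract _)) ract_mono //.
by rewrite !scalerA mcoef_cocycle setUA.
Qed.

Lemma ract_tensR_mono r S T (t : tens r) :
  ract q (mono S) (tensR t (mono T)) = mcoef T S *: tensR t (mono (T :|: S)).
Proof.
apply: (lext_map_eq (lext_map_comp (lext_map_ract _) (lext_map_tensR _))
  (lext_map_scale (lext_map_tensR _) _)) => ss h.
by rewrite !tensR_mono // ract_mono.
Qed.

Lemma tensR_tensL_tilde r S (t : tens r) :
  tensR (tensL (mono S) t) (mono set0) = lact q (mono S) (tilde t).
Proof.
apply: (lext_map_eq (lext_map_comp (lext_map_tensR _) (lext_map_tensL _))
  (lext_map_comp (lext_map_lact _) lext_map_tilde)) => ss h.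
rewrite tensL_mono // tensR_mono /= ?h // tilde_mono // lact_mono ?size_rcons ?h //.
by rewrite mcoef0r setU0 scale1r.
Qed.

Lemma tensL_tensR_tilde r S (t : tens r) :
  tensL (mono set0) (tensR t (mono S)) = ract q (mono S) (tilde t).
Proof.
apply: (lext_map_eq (lext_map_comp (lext_map_tensL _) (lext_map_tensR _))
  (lext_map_comp (lext_map_ract _) lext_map_tilde)) => ss h.
rewrite tensR_mono // tensL_mono ?size_rcons ?h // tilde_mono //.
by rewrite -[set0 :: rcons ss set0]rcons_cons ract_mono /= ?h // mcoef0l set0U scale1r.
Qed.

Lemma lmul_monol S (x : lam) : lmul q (mono S) x = \sum_T x T *: mono_mul q S T.
Proof.
rewrite /lmul (bigD1 S) //= [X in _ + X]big1 ?addr0; last first.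
  by move=> S' hS'; rewrite big1 // => T _; rewrite lbasisE (negbTE hS') mul0r scale0r.
by apply: eq_bigr => T _; rewrite lbasisE eqxx mul1r.
Qed.

Lemma lmul_monor (x : lam) T : lmul q x (mono T) = \sum_S x S *: mono_mul q S T.
Proof.
rewrite /lmul; apply: eq_bigr => S _.
rewrite (bigD1 T) //= [X in _ + X]big1 ?addr0; last first.
  by move=> T' hT'; rewrite lbasisE (negbTE hT') mulr0 scale0r.
by rewrite lbasisE eqxx mulr1.
Qed.

Lemma lmul_expandl (a x : lam) : lmul q a x = \sum_S a S *: lmul q (mono S) x.
Proof.
under [RHS]eq_bigr do rewrite lmul_monol.
rewrite /lmul; apply: eq_bigr => S _; rewrite scaler_sumr.
by apply: eq_bigr => T _; rewrite scalerA.
Qed.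

Lemma lmul_expandr (x c : lam) : lmul q x c = \sum_T c T *: lmul q x (mono T).
Proof.
under [RHS]eq_bigr do rewrite lmul_monor.
rewrite /lmul exchange_big /=; apply: eq_bigr => T _; rewrite scaler_sumr.
by apply: eq_bigr => S _; rewrite scalerA mulrC.
Qed.

Lemma lact_expand r (a : lam) (t : tens r.+1) :
  lact q a t = \sum_S a S *: lact q (mono S) t.
Proof.
rewrite /lact; under [RHS]eq_bigr do rewrite scaler_sumr.
rewrite exchange_big /=; apply: eq_bigr => w _.
under eq_bigr do rewrite scalerA mulrC -scalerA.
rewrite -scaler_sumr; congr (_ *: _).
rewrite wseq_word_sets; have := size_word_sets w; case: (word_sets w) => [|U ss] //= _.
rewrite lmul_expandl (pure_cat_sum (s1 := [::])) //; apply: eq_bigr => S _.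
by rewrite (pure_catZ (s1 := [::])).
Qed.

Lemma ract_expand r (c : lam) (t : tens r.+1) :
  ract q c t = \sum_S c S *: ract q (mono S) t.
Proof.
rewrite /ract; under [RHS]eq_bigr do rewrite scaler_sumr.
rewrite exchange_big /=; apply: eq_bigr => w _.
under eq_bigr do rewrite scalerA mulrC -scalerA.
rewrite -scaler_sumr; congr (_ *: _).
rewrite wseq_word_sets; have := size_word_sets w; case/lastP: (word_sets w) => [|ss U] //.
rewrite size_rcons => -[h]; rewrite map_rcons (update_last_rcons (fun x => lmul q x c)).
under eq_bigr do rewrite (update_last_rcons (fun x => lmul q x (mono _))).
rewrite lmul_expandr -cats1 pure_cat_sum ?size_map ?h //; apply: eq_bigr => S _.
by rewrite pure_catZ ?size_map ?h // cats1.
Qed.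

Section ScalarArgument.
Variables (r : nat) (t : tens r.+1).

Lemma lactDl (a a' : lam) : lact q (a + a') t = lact q a t + lact q a' t.
Proof.
by rewrite !(lact_expand (r := r)) -big_split; apply: eq_bigr => S _; rewrite ffunE scalerDl.
Qed.

Lemma lactZl d (a : lam) : lact q (d *: a) t = d *: lact q a t.
Proof.
by rewrite !(lact_expand (r := r)) scaler_sumr; apply: eq_bigr => S _; rewrite ffunE scalerA.
Qed.

Lemma ractDl (a a' : lam) : ract q (a + a') t = ract q a t + ract q a' t.
Proof.
by rewrite !(ract_expand (r := r)) -big_split; apply: eq_bigr => S _; rewrite ffunE scalerDl.
Qed.

Lemma ractZl d (a : lam) : ract q (d *: a) t = d *: ract q a t.
Proof.
by rewrite !(ract_expand (r := r)) scaler_sumr; apply: eq_bigr => S _; rewrite ffunE scalerA.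
Qed.

Lemma lact_suml I (s : seq I) (P : pred I) F :
  lact q (\sum_(i <- s | P i) F i) t = \sum_(i <- s | P i) lact q (F i) t.
Proof.
apply: (big_morph (fun a => lact q a t) lactDl).
by rewrite -(scale0r (0 : lam)) lactZl scale0r.
Qed.

Lemma ract_suml I (s : seq I) (P : pred I) F :
  ract q (\sum_(i <- s | P i) F i) t = \sum_(i <- s | P i) ract q (F i) t.
Proof.
apply: (big_morph (fun a => ract q a t) ractDl).
by rewrite -(scale0r (0 : lam)) ractZl scale0r.
Qed.

End ScalarArgument.

Lemma bar_d_lact r a (t : tens r.+2) : bar_d q (lact q a t) = lact q a (bar_d q t).
Proof.
rewrite !(lact_expand (r := _)) (lext_map_sum lext_map_bar_d); apply: eq_bigr => S _.
by rewrite (lext_mapZ lext_map_bar_d) bar_d_lact_mono.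
Qed.

Lemma bar_d_ract r c (t : tens r.+2) : bar_d q (ract q c t) = ract q c (bar_d q t).
Proof.
rewrite !(ract_expand (r := _)) (lext_map_sum lext_map_bar_d); apply: eq_bigr => S _.
by rewrite (lext_mapZ lext_map_bar_d) bar_d_ract_mono.
Qed.

Lemma lact_lact r a x (t : tens r.+1) : lact q a (lact q x t) = lact q (lmul q a x) t.
Proof.
rewrite [RHS]lact_suml lact_expand; apply: eq_bigr => S _.
rewrite lact_suml (lact_expand x) (lext_map_sum (lext_map_lact _)) scaler_sumr.
apply: eq_bigr => T _.
by rewrite lactZl (lext_mapZ (lext_map_lact _)) lact_lact_mono mono_mulE lactZl !scalerA.
Qed.

Lemma ract_ract r c x (t : tens r.+1) : ract q c (ract q x t) = ract q (lmul q x c) t.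
Proof.
rewrite [RHS]ract_suml (ract_expand x) (lext_map_sum (lext_map_ract _)).
apply: eq_bigr => T _.
rewrite (lext_mapZ (lext_map_ract _)) (ract_expand c) /= (ract_suml (r := r)) scaler_sumr.
apply: eq_bigr => S _.
by rewrite ractZl ract_ract_mono mono_mulE ractZl !scalerA.
Qed.

Lemma ract_lact r c x (t : tens r.+2) : ract q c (lact q x t) = lact q x (ract q c t).
Proof.
rewrite (ract_expand c) (lact_expand x) [in RHS](ract_expand c) (lext_map_sum (lext_map_lact _)).
transitivity (\sum_S \sum_T (c S * x T) *: lact q (mono T) (ract q (mono S) t)).
  apply: eq_bigr => S _; rewrite (lext_map_sum (lext_map_ract _)) scaler_sumr.
  apply: eq_bigr => T _.
  by rewrite (lext_mapZ (lext_map_ract _)) ract_lact_mono scalerA.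
apply: eq_bigr => S _; rewrite (lext_mapZ (lext_map_lact _)) (lact_expand x) scaler_sumr.
by apply: eq_bigr => T _; rewrite scalerA.
Qed.

Definition rcoef (b : mvec n) (l : 'I_n) := \prod_(j < n | (l < j)%N) q l j ^+ b j.
Definition lcoef (b : mvec n) (j : 'I_n) := \prod_(l < n | (l < j)%N) q l j ^+ b l.

Lemma rcoef_lcoef_bsub (b : mvec n) (l j : 'I_n) : (0 < b l)%N -> (0 < b j)%N ->
  rcoef b l * lcoef (bsub b l) j = lcoef b j * rcoef (bsub b j) l.
Proof.
move=> hl hj; rewrite /rcoef /lcoef (prod_exp_bsub (fun i => (l < i)%N) (q l) hj).
rewrite [\prod_(i < n | (i < j)%N) q i j ^+ b i]
  (prod_exp_bsub (fun i => (i < j)%N) (fun i => q i j) hl) /=.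
by ring.
Qed.

Lemma fTS m (b : mvec n) : fT q m.+1 b = \sum_(l < n)
  (if (0 < b l)%N then rcoef b l *: tensR (fT q m (bsub b l)) (lgen k l) else 0).
Proof. by []. Qed.

Lemma fT_tensL m (b : mvec n) : fT q m.+1 b = \sum_(j < n)
  (if (0 < b j)%N then lcoef b j *: tensL (lgen k j) (fT q m (bsub b j)) else 0).
Proof.
elim: m b => [|m IH] b.
  rewrite fTS; apply: eq_bigr => l _; case: ifP => hl //.
  rewrite [fT q 0 _]/=; case: eqP => hs; last first.
    by rewrite (lext_map0 (lext_map_tensR _)) (lext_map0 (lext_map_tensL _)) !scaler0.
  have bl0 j : j != l -> b j = 0%N.
    by move=> hj; have := bsum_eq0 j hs; rewrite bsubE (negbTE hj).
  have -> : rcoef b l = 1.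
    rewrite /rcoef big1 // => j hj; rewrite bl0 ?expr0 //.
    by apply/eqP => e; move: hj; rewrite e ltnn.
  have -> : lcoef b l = 1.
    rewrite /lcoef big1 // => j hj; rewrite bl0 ?expr0 //.
    by apply/eqP => e; move: hj; rewrite e ltnn.
  by rewrite !scale1r -[pure 0 [::]]/(mono_tensor 0 [::]) tensR_mono // tensL_mono.
pose H l j := if (0 < b l)%N && (0 < bsub b l j)%N then
   (rcoef b l * lcoef (bsub b l) j) *:
     tensL (lgen k j) (tensR (fT q m (bsub (bsub b l) j)) (lgen k l)) else 0.
transitivity (\sum_l \sum_j H l j).
  rewrite fTS; apply: eq_bigr => l _; rewrite /H; case: ifP => hl; last first.
    by rewrite big1 // => j _; rewrite hl.
  rewrite IH (lext_map_sum (lext_map_tensR _)) scaler_sumr; apply: eq_bigr => j _.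
  case: ifP => hj; last by rewrite (lext_map0 (lext_map_tensR _)) scaler0.
  by rewrite (lext_mapZ (lext_map_tensR _)) tensR_tensL scalerA.
rewrite exchange_big /=; apply: eq_bigr => j _; case: ifP => hj; last first.
  by rewrite big1 // => l _; rewrite /H bsub_gt0C hj.
rewrite (lext_map_sum (lext_map_tensL _)) scaler_sumr; apply: eq_bigr => l _.
rewrite /H bsub_gt0C hj andTb; case: ifP => hl; last by rewrite (lext_map0 (lext_map_tensL _)) scaler0.
by rewrite (lext_mapZ (lext_map_tensL _)) scalerA bsubC rcoef_lcoef_bsub // (bsub_gt0 hl).
Qed.

Lemma inP0 m : inP q (0 : tens m.+2).
Proof. by exists [::]; rewrite big_nil. Qed.

Lemma inPD m (t u : tens m.+2) : inP q t -> inP q u -> inP q (t + u).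
Proof.
move=> [s [hs ->]] [s' [hs' ->]]; exists (s ++ s').
by rewrite all_cat hs hs' big_cat.
Qed.

Lemma inP_sum m I (s : seq I) (P : pred I) (F : I -> tens m.+2) :
  (forall i, P i -> inP q (F i)) -> inP q (\sum_(i <- s | P i) F i).
Proof. by move=> hF; apply: big_ind => //; [exact: inP0 | exact: inPD]. Qed.

Lemma inP_lact m a (t : tens m.+2) : inP q t -> inP q (lact q a t).
Proof.
move=> [s [hs ->]]; exists [seq (lmul q a x.1.1, x.1.2, x.2) | x <- s].
rewrite all_map big_map (lext_map_sum (lext_map_lact _)); split => //.
by apply: eq_bigr => x _; rewrite lact_lact.
Qed.

Lemma inP_ract m c (t : tens m.+2) : inP q t -> inP q (ract q c t).
Proof.
move=> [s [hs ->]]; exists [seq (x.1.1, x.1.2, lmul q x.2 c) | x <- s].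
rewrite all_map big_map (lext_map_sum (lext_map_ract _)); split => //.
by apply: eq_bigr => x _; rewrite ract_lact ract_ract.
Qed.

Lemma inPZ m d (t : tens m.+2) : inP q t -> inP q (d *: t).
Proof. by move=> ht; rewrite -[t]lact1 -lactZl; exact: inP_lact. Qed.

Lemma inP_ftilde m (b : mvec n) : bsum b = m -> inP q (ftilde q m b).
Proof.
move=> hb; exists [:: (mono set0, b, mono set0)].
by rewrite /= hb eqxx big_seq1 /= lact1 ract1.
Qed.

Section Cycle.
Hypothesis qq1 : forall i j, q i j * q j i = 1.

Lemma rcoef_swap (b : mvec n) (l l' : 'I_n) : (l < l')%N -> (0 < b l)%N -> (0 < b l')%N ->
  rcoef b l * rcoef (bsub b l) l' * mcoef [set l'] [set l] =
  - (rcoef b l' * rcoef (bsub b l') l * mcoef [set l] [set l']).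
Proof.
move=> hll' hl hl'.
rewrite /rcoef (prod_exp_bsub (fun j => (l < j)%N) (q l) hl') hll'.
rewrite [\prod_(j < n | (l' < j)%N) q l' j ^+ b j]
  (prod_exp_bsub (fun j => (l' < j)%N) (q l') hl).
have l'l : (l' < l)%N = false by apply/negbTE; rewrite -leqNgt ltnW.
have ll' : (l == l') = false by apply/negbTE; rewrite neq_ltn hll'.
rewrite !mcoef1 l'l hll' ll' eq_sym ll'.
set X := \prod_(j < n | (l < j)%N) _; set Y := \prod_(j < n | (l' < j)%N) _.
by rewrite !mulr1 -[Y * X]mulr1 -(qq1 l l'); ring.
Qed.

Lemma fT_cycle m (b : mvec n) : bar_d q (fT q m.+1 b) = 0.
Proof.
elim: m b => [|m IH] b.
  by rewrite /bar_d big1 // => w _; rewrite big_ord0 scaler0.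
pose G l l' := if (0 < b l)%N && (0 < bsub b l l')%N then
   (rcoef b l * rcoef (bsub b l) l' * mcoef [set l'] [set l]) *:
     tensR (fT q m (bsub (bsub b l) l')) (mono ([set l'] :|: [set l])) else 0.
transitivity ((-1) ^+ m *: \sum_l \sum_l' G l l'); last first.
  rewrite sum_skew0 ?scaler0 // => [l' l|l]; rewrite /G; last first.
    by case: ifP => // _; rewrite mcoef1 eqxx mulr0 scale0r.
  rewrite bsub_gt0C; case: ifP => hc; last by rewrite oppr0.
  move/andP: hc => [hl' hl]; have hl0 := bsub_gt0 hl.
  rewrite bsubC setUC -scaleNr; congr (_ *: _).
  case: (ltngtP l l') => hll'.
  - by rewrite (rcoef_swap hll' hl0 hl').
  - by rewrite (rcoef_swap hll' hl' hl0) opprK.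
  - by rewrite (val_inj hll') mcoef1 eqxx !mulr0 oppr0.
rewrite fTS (lext_map_sum lext_map_bar_d) scaler_sumr; apply: eq_bigr => l _.
rewrite /G; case: ifP => hl /=; last by rewrite (lext_map0 lext_map_bar_d) big1 ?scaler0.
rewrite (lext_mapZ lext_map_bar_d) bar_d_tensR IH (lext_map0 (lext_map_tensR _)) add0r.
rewrite (lext_map_sum (lext_map_ract _)) !scaler_sumr; apply: eq_bigr => l' _.
case: ifP => hl'; last by rewrite (lext_map0 (lext_map_ract _)) !scaler0.
rewrite (lext_mapZ (lext_map_ract _)) ract_tensR_mono !scalerA; congr (_ *: _).
by rewrite /rcoef; ring.
Qed.

Lemma bar_d_ftilde m (b : mvec n) :
  bar_d q (ftilde q m.+1 b) = \sum_(j < n)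
    (if (0 < b j)%N then
       lcoef b j *: lact q (lgen k j) (ftilde q m (bsub b j))
       + ((-1) ^+ m.+1 * rcoef b j) *: ract q (lgen k j) (ftilde q m (bsub b j))
     else 0).
Proof.
have fR : tensR (fT q m.+1 b) (mono set0) = \sum_(j < n)
    (if (0 < b j)%N then lcoef b j *: lact q (lgen k j) (ftilde q m (bsub b j)) else 0).
  rewrite fT_tensL (lext_map_sum (lext_map_tensR _)); apply: eq_bigr => j _.
  case: ifP => _; last by rewrite (lext_map0 (lext_map_tensR _)).
  by rewrite (lext_mapZ (lext_map_tensR _)) tensR_tensL_tilde.
have fL : tensL (mono set0) (fT q m.+1 b) = \sum_(j < n)
    (if (0 < b j)%N then rcoef b j *: ract q (lgen k j) (ftilde q m (bsub b j)) else 0).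
  rewrite fTS (lext_map_sum (lext_map_tensL _)); apply: eq_bigr => j _.
  case: ifP => _; last by rewrite (lext_map0 (lext_map_tensL _)).
  by rewrite (lext_mapZ (lext_map_tensL _)) tensL_tensR_tilde.
rewrite /ftilde tilde_tensL bar_d_tensL lact1 bar_d_tensR fT_cycle.
rewrite (lext_map0 (lext_map_tensR _)) add0r ract1 (lext_mapZ (lext_map_tensL _)) fR fL.
rewrite scaler_sumr -sumrN -big_split; apply: eq_bigr => j _.
case: ifP => _ /=; last by rewrite scaler0 oppr0 addr0.
by rewrite scalerA -scaleNr exprS mulN1r mulNr.
Qed.

Lemma bar_d_inP m (t : tens m.+3) : inP q t -> inP q (bar_d q t).
Proof.
move=> [s [hs ->]]; rewrite (lext_map_sum lext_map_bar_d) big_seq.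
apply: inP_sum => x /(allP hs)/eqP hb.
rewrite bar_d_lact bar_d_ract bar_d_ftilde; apply/inP_lact/inP_ract/inP_sum => j _.
case: ifP => hj; last exact: inP0.
by apply: inPD; apply/inPZ; [apply: inP_lact | apply: inP_ract]; apply: inP_ftilde;
  rewrite bsum_bsub // hb.
Qed.

End Cycle.

End BarDifferential.

End QuantumExterior.

Unset Implicit Arguments.

(* Neither
   is |b| = m + 1, since f_b is 0 for other b. *)
Theorem lemma3p3 (k : fieldType) (n : nat) (q : 'I_n -> 'I_n -> k)
  (hchar : [pchar k] =i pred0)
  (hq0 : forall i j, q i j != 0)
  (hqinv : forall i j, q j i = (q i j)^-1)
  (hqdiag : forall i, q i i = -1) :
  (forall (m : nat) (t : Tens k n m.+3),
      @inP k n q m.+1 t -> @inP k n q m (bar_d q t))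
  /\
  (forall (m : nat) (b : mvec n), bsum b = m.+1 ->
      bar_d q (ftilde q m.+1 b) =
      \sum_(j < n)
        (if (0 < b j)%N then
           (\prod_(l < n | (l < j)%N) q l j ^+ b l) *: lact q (lgen k j) (ftilde q m (bsub b j))
           + ((-1) ^+ m.+1 * \prod_(l < n | (j < l)%N) q j l ^+ b l)
               *: ract q (lgen k j) (ftilde q m (bsub b j))
         else 0)).
Proof.
have qq1 i j : q i j * q j i = 1 by rewrite [q j i]hqinv divff.
split; first exact: bar_d_inP qq1.
by move=> m b _; exact: bar_d_ftilde qq1 m b.
Qed.
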